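(* For every $k\ge0$, with $l=2^k$, $$f^{(2l-1)}(x,z)=x^{l}+\sum_{j=0}^{k}x^{\,l-2^j}z^{2^j}.$$
   Context: $\mathbb{F}=\mathrm{GF}(2)$, $R=\mathbb{F}[x,z]$, $|\cdot|$ is total degree. Let $(r_0,r_1,\ldots)$ be the binary sequence with $r_i=1$ if $i=2^j-1$ for some $j\ge 0$ and $r_i=0$ otherwise. For $n\ge1$ its inverse form is $R^{(1-n)}=\sum_{j=1-n}^{0}r_{-j}\,x^{j}z^{1-n-j}\in\mathbb{F}[x^{-1},z^{-1}]$. For a form $f\in R$ and such a form $G$, $\Delta(f;G)$ is the coefficient of $x^{|f|+|G|}z^0$ in $f\cdot G$ computed in $\mathbb{F}[x^{\pm1},z^{\pm1}]$ if $|f|+|G|\le 0$, and $0$ otherwise. Define forms recursively: $(f^{(0)},g^{(0)})=(x+z,z)$; for $k\ge0$ let $d_k=|g^{(k)}|-|f^{(k)}|$ and $\Delta_k=\Delta(f^{(k)};R^{(-1-k)})$, and set $(f^{(k+1)},g^{(k+1)})=(f^{(k)},zg^{(k)})$ if $\Delta_k=0$; $=(f^{(k)}+x^{-d_k}g^{(k)},\,zg^{(k)})$ if $\Delta_k=1$ and $d_k\le0$; $=(x^{d_k}f^{(k)}+g^{(k)},\,zf^{(k)})$ if $\Delta_k=1$ and $d_k>0$. *)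

From HB Require Import structures.
From mathcomp Require Import all_boot all_order all_algebra.
From mathcomp Require Import mpoly.
Set Implicit Arguments. Unset Strict Implicit. Unset Printing Implicit Defensive.
Import GRing.Theory.
Local Open Scope ring_scope.

Definition R := {mpoly 'F_2[2]}.
Definition xv : R := 'X_(ord0 : 'I_2).
Definition zv : R := 'X_(ord_max : 'I_2).

Definition mon2 (a b : nat) : 'X_{1..2} := [multinom [tuple a; b]].

(* total degree |f| (msize = 1 + total degree; the forms here are nonzero) *)
Definition tdeg (f : R) : nat := (msize f).-1.

(* r_i = 1 iff i = 2^j - 1 for some j >= 0  (necessarily j <= i) *)
Definition rseq (i : nat) : bool := [exists j : 'I_i.+2, (i.+1 == 2 ^ j)%N].

(* Delta(f; R^(1-n)): coefficient of x^(|f|+|G|) z^0 in f * G, where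
   G = R^(1-n) = sum_{j=1-n}^{0} r_{-j} x^j z^(1-n-j), |G| = 1-n.
   Written out: a monomial x^a z^b of f contributes with j = b+1-n, which
   requires a + b = |f| and 0 <= b <= n-1, and weight r_{-j} = r_{n-1-b}.
   Hence, if |f| + (1-n) <= 0 (i.e. |f| <= n-1), the coefficient is
   sum_{b=0}^{|f|} f_{x^(|f|-b) z^b} * r_{n-1-b}; otherwise Delta = 0. *)
Definition Delta (f : R) (n : nat) : 'F_2 :=
  if (tdeg f <= n.-1)%N then
    \sum_(b < (tdeg f).+1) f@_(mon2 (tdeg f - b) b) * (rseq (n.-1 - b))%:R
  else 0.

(* one step of the recursion, at index k, using Delta(f^(k); R^(-1-k)),
   i.e. n = k+2; d_k = |g| - |f| (an integer). *)
Definition step (k : nat) (fg : R * R) : R * R :=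
  let: (f, g) := fg in
  if Delta f k.+2 == 0 then (f, zv * g)
  else if (tdeg g <= tdeg f)%N           (* d_k <= 0: x^(-d_k) = x^(|f|-|g|) *)
       then (f + xv ^+ (tdeg f - tdeg g) * g, zv * g)
       else (xv ^+ (tdeg g - tdeg f) * f + g, zv * f).

Fixpoint fgseq (k : nat) : R * R :=
  match k with
  | 0 => (xv + zv, zv)
  | k'.+1 => step k' (fgseq k')
  end.

Definition fseq (k : nat) : R := (fgseq k).1.
Definition gseq (k : nat) : R := (fgseq k).2.

From mathcomp Require Import all_boot all_order all_algebra.
From mathcomp Require Import mpoly.
From mathcomp Require Import ring zify.
Local Open Scope ring_scope.
Import GRing.Theory.

(* Dehomogenise with X = z/x: each form x^d p(z/x) of degree d is encoded by a
   polynomial p in GF(2)[X] of degree <= d (homogen d p below).  With the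
   Chebyshev-like sequence U_0 = 0, U_1 = 1, U_(n+2) = U_(n+1) + X^2 U_n and
   A_n = U_(n+1) + X U_n, the forms at even steps are
       f^(2m) = homogen (m+1) A_(m+1),    g^(2m) = homogen (m+1) (X A_m).
   The discrepancies are coefficients of A_n s_T, where s_T = sum_(j<T) X^(2^j)
   encodes the sequence r.  Cassini's identity for U and the equation
   s_T^2 + s_T + X = X^(2^T) give E (E + A_n) = X^(2n+1) + X^(2^T) A_n^2 for
   E = A_n s_T + X U_n; as A_n has constant term 1, E = X^(2n+1) + O(X^(2n+2)),
   so the discrepancy at step 2m is 0 and at step 2m+1 it is 1.  The two steps
   then multiply g by z and replace f by x f + g, which is A_(m+2) = A_(m+1) +
   X^2 A_m.  Finally the doubling formulas give A_(2^k) = 1 + s_(k+1), whose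
   homogenisation in degree 2^k is the claimed form. *)

Section PolynomialSequences.

Context {F : comNzRingType}.
Local Notation P := {poly F}.

Fixpoint U (n : nat) : P :=
  match n with
  | 0 => 0
  | 1 => 1
  | (m.+1 as k).+1 => U k + 'X^2 * U m
  end.

Lemma U_rec n : U n.+2 = U n.+1 + 'X^2 * U n. Proof. by []. Qed.

Lemma U_add m n : U (m + n).+1 = U m.+1 * U n.+1 + 'X^2 * U m * U n.
Proof.
suff: U (m + n).+1 = U m.+1 * U n.+1 + 'X^2 * U m * U n /\
      U (m.+1 + n).+1 = U m.+2 * U n.+1 + 'X^2 * U m.+1 * U n by case.
elim: m => [|m [IH0 IH1]].
  by rewrite add0n add1n U_rec /=; split; ring.
split=> //; rewrite !addSn U_rec -!addSn IH1 IH0 (U_rec m.+1) (U_rec m); ring.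
Qed.

Lemma U_double_succ n : U (2 * n).+1 = U n.+1 ^+ 2 + 'X^2 * U n ^+ 2.
Proof. by rewrite mul2n -addnn U_add; ring. Qed.

Lemma size_U n : (size (U n) <= n)%N.
Proof.
suff: (size (U n) <= n)%N /\ (size (U n.+1) <= n.+1)%N by case.
elim: n => [|n [IH0 IH1]]; first by rewrite size_poly0 size_poly1.
split=> //; rewrite U_rec; apply: leq_trans (size_polyD _ _) _.
rewrite geq_max (leq_trans IH1) //=.
by apply: leq_trans (size_polyMleq _ _) _; rewrite size_polyXn; lia.
Qed.

Lemma U_coef0 n : (U n.+1)`_0 = 1.
Proof.
elim: n => [|n IH]; first by rewrite coef1.
by rewrite U_rec coefD coefXnM IH addr0.
Qed.

(* A_n = U_(n+1) + X U_n, the dehomogenisation f^(2n-2)(1, X) of the forms. *)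
Definition A (n : nat) : P := U n.+1 + 'X * U n.

Lemma A_rec n : A n.+2 = A n.+1 + 'X^2 * A n.
Proof. rewrite /A !U_rec; ring. Qed.

Lemma size_A n : (size (A n) <= n.+1)%N.
Proof.
apply: leq_trans (size_polyD _ _) _; rewrite geq_max size_U /=.
apply: leq_trans (size_polyMleq _ _) _.
by rewrite size_polyX; have := size_U n; lia.
Qed.

Lemma A_coef0 n : (A n)`_0 = 1.
Proof. by rewrite coefD coefXM U_coef0 addr0. Qed.

Lemma A_neq0 n : A n != 0.
Proof.
apply/eqP => A0; have := A_coef0 n.
by rewrite A0 coef0 => /eqP; rewrite eq_sym oner_eq0.
Qed.

Definition s (T : nat) : P := \sum_(j < T) 'X^(2 ^ j).

Lemma s_coef T i : (0 < i < T)%N -> (s T)`_i = (rseq i.-1)%:R.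
Proof.
case/andP=> i_gt0 iT; rewrite /s coef_sum /rseq prednK //.
case: existsP => [[j ij]|no_j].
  have jT : (j < T)%N.
    by apply: (ltn_trans _ iT); have := ltn_expl j (ltnSn 1); rewrite -(eqP ij).
  rewrite (bigD1 (Ordinal jT)) //= coefXn ij big1 ?addr0 // => l.
  rewrite coefXn -val_eqE /= => /negbTE lj.
  by rewrite (eqP ij) eqn_exp2l // eq_sym lj.
rewrite big1 // => l _; rewrite coefXn; case: eqP => // il.
have li : (l < i.+1)%N by rewrite il ltnS ltnW // ltn_expl.
by case: no_j; exists (Ordinal li); rewrite /= il.
Qed.

Lemma s_coef0 T : (s T)`_0 = 0.
Proof.
rewrite /s coef_sum big1 // => j _.
by rewrite coefXn eq_sym eqn0Ngt expn_gt0.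
Qed.

Lemma coef_mul_s {p : P} {n N T : nat} : (size p <= n.+1)%N -> (n < N < T)%N ->
  (p * s T)`_N = \sum_(b < n.+1) p`_b * (rseq (N.-1 - b))%:R.
Proof.
move=> sp /andP[nN NT]; rewrite coefM.
rewrite (big_ord_widen N.+1 (fun b => p`_b * (rseq (N.-1 - b))%:R)); last lia.
rewrite [RHS]big_mkcond /=; apply: eq_bigr => b _.
case: ifP => bn.
  by rewrite s_coef; [congr (_ * (rseq _)%:R); lia | lia].
by rewrite nth_default ?mul0r //; apply: leq_trans sp _; lia.
Qed.

Lemma low_coef_of_product {E G H : P} {k M : nat} : G`_0 = 1 -> (k < M)%N ->
  E * G = 'X^k + 'X^M * H -> (forall i, (i < k)%N -> E`_i = 0) /\ E`_k = 1.
Proof.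
move=> G0 kM EG.
have coefEG i : (i < M)%N -> (E * G)`_i = (i == k)%:R.
  by move=> iM; rewrite EG coefD coefXn coefXnM iM addr0.
have coefE_low i : (forall j, (j < i)%N -> E`_j = 0) -> (E * G)`_i = E`_i.
  move=> Elow; rewrite coefM big_ord_recr /= subnn G0 mulr1 big1 ?add0r //.
  by move=> j _; rewrite Elow ?mul0r.
have Ez : forall i, (i < k)%N -> E`_i = 0.
  elim/ltn_ind => i IH ik.
  rewrite -coefE_low => [|j ji]; last exact/IH/(ltn_trans ji).
  by rewrite coefEG ?(ltn_eqF ik) // (ltn_trans ik).
by split=> //; rewrite -coefE_low // coefEG // eqxx.
Qed.

End PolynomialSequences.

Section CharacteristicTwo.

Context {F : comNzRingType}.
Hypothesis charF2 : 2 \in [pchar F].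
Local Notation P := {poly F}.
Local Notation U := (@U F).
Local Notation A := (@A F).
Local Notation s := (@s F).

(* In characteristic 2 an identity may be checked over the integers up to
   an even error term 2c; [ring] then proves the integral identity. *)
Lemma char2_eq (c a b : P) : a = b + c *+ 2 -> a = b.
Proof.
by rewrite -mulr_natr -polyC_natr (pcharf0 charF2) polyC0 mulr0 addr0.
Qed.

Lemma sqr_sum (I : Type) (r : seq I) (f : I -> P) :
  (\sum_(i <- r) f i) ^+ 2 = \sum_(i <- r) f i ^+ 2.
Proof.
have charP2 : 2 \in [pchar P] by rewrite pchar_poly.
rewrite -(pFrobenius_autE charP2) raddf_sum.
by apply: eq_bigr => i _; exact: pFrobenius_autE.
Qed.

Lemma U_double n : U (2 * n) = U n ^+ 2.
Proof.
case: n => [|n]; first by rewrite /= expr0n.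
have -> : (2 * n.+1 = (n + n.+1).+1)%N by lia.
rewrite U_add U_rec; apply: (char2_eq ('X^2 * U n * U n.+1)); ring.
Qed.

Lemma U_cassini n : U n.+1 ^+ 2 + U n * U n.+2 = 'X^(2 * n).
Proof.
elim: n => [|n IH]; first by rewrite /= mul0r addr0 expr1n muln0 expr0.
rewrite mulnS exprD -IH !U_rec.
by apply: (char2_eq (U n.+1 ^+ 2 + 'X^2 * U n * U n.+1)); ring.
Qed.

Lemma U_pow2 k : U (2 ^ k) = 1.
Proof. by elim: k => [//|k IH]; rewrite expnS U_double IH expr1n. Qed.

Lemma A_norm n :
  'X * A n ^+ 2 + A n * ('X * U n) + ('X * U n) ^+ 2 = 'X^((2 * n).+1).
Proof.
rewrite [RHS]exprS -U_cassini /A U_rec.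
by apply: (char2_eq ('X^2 * U n * (U n.+1 + U n))); ring.
Qed.

Lemma s_succ_sqr T : s T.+1 = 'X + s T ^+ 2.
Proof.
rewrite /s big_ord_recl sqr_sum expn0 expr1; congr (_ + _).
by apply: eq_bigr => j _; rewrite -exprM mulnC -expnS.
Qed.

Lemma s_artin_schreier T : s T ^+ 2 + s T + 'X = 'X^(2 ^ T).
Proof.
have := s_succ_sqr T; rewrite /s big_ord_recr /= -/(s T) => eT.
have -> : s T ^+ 2 = s T + 'X^(2 ^ T) - 'X by rewrite eT addrC addKr.
by apply: (char2_eq (s T)); ring.
Qed.

Lemma U_pow2_succ k : U (2 ^ k).+1 = 1 + s k.+1 + 'X.
Proof.
elim: k => [|k IH].
  by rewrite /s big_ord1 /= expr1; apply: (char2_eq (- 'X)); ring.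
rewrite expnS U_double_succ IH U_pow2 (s_succ_sqr k.+1) expr1n.
by apply: (char2_eq ('X^2 + s k.+1 + s k.+1 * 'X)); ring.
Qed.

Lemma A_pow2 k : A (2 ^ k) = 1 + s k.+1.
Proof. by rewrite /A U_pow2_succ U_pow2; apply: (char2_eq ('X)); ring. Qed.

Lemma key_factorisation n T :
  (A n * s T + 'X * U n) * (A n * s T + 'X * U n + A n) =
  'X^((2 * n).+1) + 'X^(2 ^ T) * A n ^+ 2.
Proof.
rewrite -A_norm -s_artin_schreier.
by apply: (char2_eq (A n * s T * ('X * U n) - 'X * A n ^+ 2)); ring.
Qed.

Lemma discrepancies {n : nat} : (0 < n)%N ->
  (A n * s (2 * n).+2)`_(2 * n) = 0 /\ (A n * s (2 * n).+2)`_((2 * n).+1) = 1.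
Proof.
move=> n_gt0; set T := (2 * n).+2.
have TM : ((2 * n).+1 < 2 ^ T)%N by apply: ltn_trans (ltn_expl _ _).
have unit0 : (A n * s T + 'X * U n + A n)`_0 = 1.
  by rewrite coefD A_coef0 coefD coefXM coefM big_ord1 s_coef0 mulr0 /= !add0r.
have [Ez E1] := low_coef_of_product unit0 TM (key_factorisation n T).
have XU_high i : (2 * n <= i)%N -> ('X * U n)`_i = 0.
  move=> ni; rewrite coefXM; case: i ni => // i ni.
  by rewrite nth_default //; apply: leq_trans (size_U n) _; lia.
split; last by move: E1; rewrite coefD XU_high ?addr0.
by have := Ez (2 * n)%N (ltnSn _); rewrite coefD XU_high ?addr0.
Qed.

End CharacteristicTwo.

Lemma char_F2 : 2 \in [pchar 'F_2].
Proof. exact: pchar_Fp. Qed.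

Lemma mon2E a b (i : 'I_2) : mon2 a b i = if i == ord0 then a else b.
Proof. by case: i => [[|[|i]] Hi] //=; rewrite mnm_tnth. Qed.

Lemma mon2_inj a b a' b' : mon2 a b = mon2 a' b' -> a = a' /\ b = b'.
Proof.
move=> e; split.
  by have := congr1 (fun m : 'X_{1..2} => m ord0) e; rewrite !mon2E.
by have := congr1 (fun m : 'X_{1..2} => m ord_max) e; rewrite !mon2E.
Qed.

Lemma mdeg_mon2 a b : mdeg (mon2 a b) = (a + b)%N.
Proof. by rewrite mdegE big_ord_recr big_ord1 !mon2E. Qed.

Lemma mon2X a b : xv ^+ a * zv ^+ b = 'X_[mon2 a b].
Proof.
rewrite /xv /zv !mpolyXn -mpolyXD; congr 'X_[_]; apply/mnmP => i.
rewrite mnmDE !mulmnE !mnm1E mon2E.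
by case: i => [[|[|i]] Hi] //; rewrite -!val_eqE /= ?mul1n ?mul0n ?addn0.
Qed.

(* Homogenisation in degree d: the binary form x^d p(z/x) of a polynomial p of
   degree <= d. Every form f^(k), g^(k) is of this shape. *)
Definition homogen (d : nat) (p : {poly 'F_2}) : R :=
  \sum_(b < d.+1) p`_b *: 'X_[mon2 (d - b) b].

Implicit Types p q : {poly 'F_2}.

Lemma homogen0 d : homogen d 0 = 0.
Proof. by rewrite /homogen big1 // => b _; rewrite coef0 scale0r. Qed.

Lemma homogenD d p q : homogen d (p + q) = homogen d p + homogen d q.
Proof.
by rewrite /homogen -big_split; apply: eq_bigr => b _; rewrite coefD scalerDl.
Qed.

Lemma homogen_sum d (I : Type) (r : seq I) (f : I -> {poly 'F_2}) :
  homogen d (\sum_(i <- r) f i) = \sum_(i <- r) homogen d (f i).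
Proof. exact: (big_morph (homogen d) (homogenD d) (homogen0 d)). Qed.

Lemma homogen_coef d p b : (b <= d)%N -> (homogen d p)@_(mon2 (d - b) b) = p`_b.
Proof.
move=> bd; rewrite /homogen raddf_sum /= (bigD1 (Ordinal (bd : b < d.+1)%N)) //=.
rewrite mcoeffZ mcoeffX eqxx mulr1 big1 ?addr0 // => c /negbTE cb.
rewrite mcoeffZ mcoeffX; case: eqP => [/mon2_inj [_ e]|]; last by rewrite mulr0.
by move: cb; rewrite -val_eqE /= e eqxx.
Qed.

Lemma homogenXn d c : (c <= d)%N -> homogen d 'X^c = xv ^+ (d - c) * zv ^+ c.
Proof.
move=> cd; rewrite mon2X /homogen (bigD1 (Ordinal (cd : c < d.+1)%N)) //=.
rewrite coefXn eqxx scale1r big1 ?addr0 // => b /negbTE bc.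
by rewrite coefXn; move: bc; rewrite -val_eqE /= => ->; rewrite scale0r.
Qed.

Lemma homogen_xv d p : (size p <= d.+1)%N -> xv * homogen d p = homogen d.+1 p.
Proof.
move=> sp; rewrite /homogen mulr_sumr [RHS]big_ord_recr /=.
rewrite nth_default // scale0r addr0.
apply: eq_bigr => b _; rewrite -scalerAr -mon2X mulrA -exprS -mon2X subSn //.
by rewrite -ltnS.
Qed.

Lemma homogen_zv d p : zv * homogen d p = homogen d.+1 ('X * p).
Proof.
rewrite /homogen mulr_sumr [RHS]big_ord_recl /= coefXM eqxx scale0r add0r.
apply: eq_bigr => b _; rewrite -scalerAr -!mon2X mulrCA -exprS coefXM /=.
by rewrite /bump /= add1n subSS.
Qed.

Lemma tdeg_homogen d p : p != 0 -> (size p <= d.+1)%N -> tdeg (homogen d p) = d.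
Proof.
move=> p0 sp; set b := (size p).-1.
have bd : (b <= d)%N by rewrite /b; lia.
have : mon2 (d - b) b \in msupp (homogen d p).
  by rewrite mcoeff_msupp homogen_coef // -lead_coefE lead_coef_eq0.
move/msize_mdeg_lt; rewrite mdeg_mon2 subnK // => lt_d.
have le_d : (msize (homogen d p) <= d.+1)%N.
  apply: leq_trans (msize_sum _ _ _) _; apply/bigmax_leqP => c _.
  apply: leq_trans (msizeZ_le _ _) _.
  by rewrite msizeX mdeg_mon2 subnK // -ltnS.
by rewrite /tdeg; lia.
Qed.

Lemma Delta_homogen {d p N T} : p != 0 -> (size p <= d.+1)%N -> (d < N < T)%N ->
  Delta (homogen d p) N = (p * s T)`_N.
Proof.
move=> p0 sp dNT; rewrite /Delta tdeg_homogen // (coef_mul_s sp dNT).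
have -> : (d <= N.-1)%N by lia.
by apply: eq_bigr => b _; rewrite homogen_coef // -ltnS.
Qed.

Lemma size_XnA n j : (size ('X^j * A n : {poly 'F_2})%R <= n.+1 + j)%N.
Proof. by rewrite mulrC size_mulXn ?A_neq0 // addnC leq_add2r size_A. Qed.

Lemma fgseq_even m :
  fgseq (2 * m) = (homogen m.+1 (A m.+1), homogen m.+1 ('X * A m)).
Proof.
elim: m => [|m IH].
  have A1 : A 1 = 'X^0 + 'X^1 :> {poly 'F_2} by rewrite /A /=; ring.
  have XA0 : 'X * A 0 = 'X^1 :> {poly 'F_2} by rewrite /A /=; ring.
  by rewrite A1 XA0 homogenD !homogenXn //= expr0 expr1 mulr1 mul1r.
have -> : (2 * m.+1 = (2 * m).+2)%N by lia.
have e : (2 * m).+2 = (2 * m.+1)%N by lia.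
rewrite /= IH /step e.
have [disc0 disc1] := discrepancies char_F2 (ltn0Sn m).
have f_nz : A m.+1 != 0 :> {poly 'F_2} := A_neq0 _.
have f_size : (size (A m.+1 : {poly 'F_2}) <= m.+2)%N := size_A _.
have g_nz : 'X^2 * A m != 0 :> {poly 'F_2}.
  by rewrite mulf_eq0 expf_eq0 polyX_eq0 andbF (negbTE (A_neq0 m)).
have g_size : (size ('X^2 * A m : {poly 'F_2})%R <= m.+3)%N.
  by rewrite (leq_trans (size_XnA m 2)) ?addn2.
have D0 : (m.+1 < 2 * m.+1 < (2 * m.+1).+2)%N by lia.
have D1 : (m.+1 < (2 * m.+1).+1 < (2 * m.+1).+2)%N by lia.
rewrite (Delta_homogen f_nz f_size D0) disc0 eqxx /=.
rewrite (Delta_homogen f_nz f_size D1) disc1 oner_eq0 /=.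
rewrite homogen_zv mulrA -expr2 tdeg_homogen // tdeg_homogen // ltnn subSnn expr1.
by rewrite homogen_xv // -homogenD -A_rec homogen_zv.
Qed.

Theorem mainTheorem13 (k : nat) :
  fseq (2 * 2 ^ k - 1) =
    xv ^+ (2 ^ k) + \sum_(j < k.+1) xv ^+ (2 ^ k - 2 ^ j) * zv ^+ (2 ^ j).
Proof.
have l_gt0 : (0 < 2 ^ k)%N by rewrite expn_gt0.
have -> : (2 * 2 ^ k - 1 = (2 * (2 ^ k).-1).+1)%N by lia.
have e : (2 * (2 ^ k).-1).+2 = (2 * 2 ^ k)%N by lia.
rewrite /fseq /= fgseq_even /step prednK // e.
have [disc0 _] := discrepancies char_F2 l_gt0.
have bounds : (2 ^ k < 2 * 2 ^ k < (2 * 2 ^ k).+2)%N by lia.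
rewrite (Delta_homogen (A_neq0 _) (size_A _) bounds) disc0 eqxx /=.
rewrite (A_pow2 char_F2) homogenD homogen_sum -(expr0 'X) homogenXn //.
rewrite subn0 expr0 mulr1; congr (_ + _); apply: eq_bigr => j _.
by rewrite homogenXn // leq_pexp2l // -ltnS.
Qed.
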